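(* Let $I=\{1,\dots,m\}$, $J=\{1,\dots,n\}$, let $b\in\mathbb{R}^m$, let $\hat{x}\in\mathbb{R}^n$, and let $\Omega\subseteq\mathbb{R}^{m\times n}$ be a convex set. Consider the problem NLO-DG: \[ \min_{A,c,\pi}\ \sum_{j\in J}c_j\hat{x}_j-\sum_{i\in I}b_i\pi_i \] subject to $A\in\Omega$; $\sum_{j\in J}a_{ij}\hat{x}_j\ge b_i$ for all $i\in I$; $\sum_{i\in I}\pi_i=1$; $\sum_{i\in I}a_{ij}\pi_i=c_j$ for all $j\in J$; $\pi_i\ge 0$ for all $i\in I$. Here $A=(a_{ij})\in\mathbb{R}^{m\times n}$ with rows $a_i$, $c\in\mathbb{R}^n$, $\pi\in\mathbb{R}^m$. For each $i\in I$ let \[ t_i=\min_{A}\Big\{\sum_{j\in J}a_{ij}\hat{x}_j-b_i \;:\; A\in\Omega,\ A\hat{x}\ge b\Big\}, \] and let $A^{(i)}$ be an optimal solution of this problem. Let $i^*\in\arg\min_{i\in I}t_i$ and $A^*=A^{(i^* )}$ (with rows $a^*_i$). Then the optimal value of NLO-DG is $t_{i^*}$, and an optimal solution $(A,c,\pi)$ of NLO-DG is given by $a_i=a^*_i$ for all $i\in I$, $c=a^*_{i^*}$, $\pi=e_{i^*}$. Moreover, if for every $i\in I$ either $b_i>0$ or $a_i\neq 0$ for all $A\in\Omega\cap\{A: A\hat{x}\ge b\}$, then this solution satisfies $c\neq 0$ and $a_i\neq 0$ for all $i\in I$.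
   Context: $e_i$ denotes the $i$-th unit vector in $\mathbb{R}^m$. $a_i$ denotes the $i$-th row of a matrix $A$ (viewed as a vector in $\mathbb{R}^n$). *)

(* Vectors of R^k are row vectors 'rV[R]_k (entry v 0 j);
   A : 'M[R]_(m, n), its i-th row a_i is  row i A. *)
From HB Require Import structures.
From mathcomp Require Import all_boot all_order all_algebra.
Set Implicit Arguments. Unset Strict Implicit. Unset Printing Implicit Defensive.
Import Order.TTheory GRing.Theory Num.Theory.
Local Open Scope ring_scope.

Definition convex_mx (R : realFieldType) (m n : nat) (Omega : 'M[R]_(m, n) -> Prop) :=
  forall (A B : 'M[R]_(m, n)) (t : R), Omega A -> Omega B -> 0 <= t -> t <= 1 ->
    Omega (t *: A + (1 - t) *: B).

Definition feasA (R : realFieldType) (m n : nat) (Omega : 'M[R]_(m, n) -> Prop)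
  (b : 'rV[R]_m) (xhat : 'rV[R]_n) (A : 'M[R]_(m, n)) : Prop :=
  Omega A /\ forall i : 'I_m, \sum_(j < n) A i j * xhat 0 j >= b 0 i.

Definition slack (R : realFieldType) (m n : nat) (b : 'rV[R]_m) (xhat : 'rV[R]_n)
  (A : 'M[R]_(m, n)) (i : 'I_m) : R :=
  \sum_(j < n) A i j * xhat 0 j - b 0 i.

Definition nlo_feas (R : realFieldType) (m n : nat) (Omega : 'M[R]_(m, n) -> Prop)
  (b : 'rV[R]_m) (xhat : 'rV[R]_n) (A : 'M[R]_(m, n)) (c : 'rV[R]_n) (pi : 'rV[R]_m)
  : Prop :=
  [/\ feasA Omega b xhat A,
      \sum_(i < m) pi 0 i = 1,
      (forall j : 'I_n, \sum_(i < m) A i j * pi 0 i = c 0 j)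
    & (forall i : 'I_m, 0 <= pi 0 i)].

Definition nlo_obj (R : realFieldType) (m n : nat) (b : 'rV[R]_m) (xhat : 'rV[R]_n)
  (c : 'rV[R]_n) (pi : 'rV[R]_m) : R :=
  \sum_(j < n) c 0 j * xhat 0 j - \sum_(i < m) b 0 i * pi 0 i.

(* The objective of NLO-DG equals the pi-weighted average of the slacks
   sum_j a_ij xhat_j - b_i of A, so it is at least the smallest slack of any
   feasible A, which is t_{i*}.  Choosing pi = e_{i*} and A = A^{i*} turns the
   average into the single slack t_{i*}.  A zero row i would have slack
   -b_i < 0 when b_i > 0, contradicting A xhat >= b. *)
From HB Require Import structures.
From mathcomp Require Import all_boot all_order all_algebra.
Set Implicit Arguments. Unset Strict Implicit. Unset Printing Implicit Defensive.
Import Order.TTheory GRing.Theory Num.Theory.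
Local Open Scope ring_scope.

Lemma sumr_mul_delta (R : pzSemiRingType) (m : nat) (k : 'I_m) (F : 'I_m -> R) :
  \sum_(i < m) F i * (delta_mx 0 k : 'rV[R]_m) 0 i = F k.
Proof.
rewrite (bigD1 k) //= big1 ?addr0 => [|i /negbTE ik]; rewrite mxE.
  by rewrite !eqxx mulr1.
by rewrite ik andbF mulr0.
Qed.

Lemma convex_comb_ge (R : numDomainType) (I : finType) (w f : I -> R) (t : R) :
  (forall i, 0 <= w i) -> \sum_i w i = 1 -> (forall i, t <= f i) ->
  t <= \sum_i w i * f i.
Proof.
move=> w_ge0 w_sum1 t_le_f.
rewrite -[t]mul1r -w_sum1 mulr_suml.
by apply: ler_sum => i _; apply: ler_wpM2l.
Qed.

Section NLODG.

Variables (R : realFieldType) (m n : nat).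
Variables (b : 'rV[R]_m) (xhat : 'rV[R]_n) (Omega : 'M[R]_(m, n) -> Prop).

Lemma nlo_obj_slack (A : 'M[R]_(m, n)) (c : 'rV[R]_n) (pi : 'rV[R]_m) :
  (forall j, \sum_(i < m) A i j * pi 0 i = c 0 j) ->
  nlo_obj b xhat c pi = \sum_(i < m) pi 0 i * slack b xhat A i.
Proof.
move=> cE; rewrite /nlo_obj /slack.
under eq_bigr => j _ do rewrite -cE mulr_suml.
rewrite exchange_big /= -sumrB; apply: eq_bigr => i _.
rewrite mulrBr mulr_sumr mulrC; congr (_ - _).
by apply: eq_bigr => j _; rewrite mulrCA mulrA.
Qed.

Lemma nlo_obj_ge (t : R) (A : 'M[R]_(m, n)) (c : 'rV[R]_n) (pi : 'rV[R]_m) :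
  (forall A' i, feasA Omega b xhat A' -> t <= slack b xhat A' i) ->
  nlo_feas Omega b xhat A c pi -> t <= nlo_obj b xhat c pi.
Proof.
move=> t_le_slack [feasA_A pi_sum1 cE pi_ge0].
by rewrite (nlo_obj_slack cE); apply: convex_comb_ge => // i; apply: t_le_slack.
Qed.

Lemma nlo_feas_delta (A : 'M[R]_(m, n)) (k : 'I_m) :
  feasA Omega b xhat A -> nlo_feas Omega b xhat A (row k A) (delta_mx 0 k).
Proof.
move=> feasA_A; split => //.
- by rewrite -(sumr_mul_delta k (fun=> 1)); apply: eq_bigr => i _; rewrite mul1r.
- by move=> j; rewrite sumr_mul_delta mxE.
- by move=> i; rewrite mxE ler0n.
Qed.

Lemma nlo_obj_delta (A : 'M[R]_(m, n)) (k : 'I_m) :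
  nlo_obj b xhat (row k A) (delta_mx 0 k) = slack b xhat A k.
Proof.
rewrite /nlo_obj /slack -(sumr_mul_delta k (b 0)); congr (_ - _).
by apply: eq_bigr => j _; rewrite mxE.
Qed.

Lemma slack_row0 (A : 'M[R]_(m, n)) (i : 'I_m) :
  row i A = 0 -> slack b xhat A i = - b 0 i.
Proof.
move=> /rowP rowA0; rewrite /slack big1 ?add0r // => j _.
by move: (rowA0 j); rewrite !mxE => ->; rewrite mul0r.
Qed.

Lemma feasA_slack_ge0 (A : 'M[R]_(m, n)) (i : 'I_m) :
  feasA Omega b xhat A -> 0 <= slack b xhat A i.
Proof. by move=> [_ Axhat_ge_b]; rewrite subr_ge0. Qed.

Lemma feasA_row_neq0 (A : 'M[R]_(m, n)) (i : 'I_m) :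
  feasA Omega b xhat A -> 0 < b 0 i -> row i A != 0.
Proof.
move=> feasA_A b_gt0; apply/eqP => /slack_row0 slackE.
by have := feasA_slack_ge0 i feasA_A; rewrite slackE oppr_ge0 leNgt b_gt0.
Qed.

End NLODG.

Theorem theorem1 (R : realFieldType) (m n : nat)
  (b : 'rV[R]_m) (xhat : 'rV[R]_n) (Omega : 'M[R]_(m, n) -> Prop)
  (Ai : 'I_m -> 'M[R]_(m, n)) (istar : 'I_m) :
  convex_mx Omega ->
  (* A^(i) is an optimal solution of the i-th subproblem, t_i = slack (A^(i)) i *)
  (forall i : 'I_m, feasA Omega b xhat (Ai i) /\
     forall A : 'M[R]_(m, n), feasA Omega b xhat A ->
       slack b xhat (Ai i) i <= slack b xhat A i) ->
  (* i* is an argmin of t_i *)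
  (forall i : 'I_m, slack b xhat (Ai istar) istar <= slack b xhat (Ai i) i) ->
  let Astar := Ai istar in
  let tstar := slack b xhat Astar istar in
  [/\ nlo_feas Omega b xhat Astar (row istar Astar) (delta_mx 0 istar),
      nlo_obj b xhat (row istar Astar) (delta_mx 0 istar) = tstar,
      (forall (A : 'M[R]_(m, n)) (c : 'rV[R]_n) (pi : 'rV[R]_m),
         nlo_feas Omega b xhat A c pi -> tstar <= nlo_obj b xhat c pi)
    & ((forall i : 'I_m, 0 < b 0 i \/
          forall A : 'M[R]_(m, n), feasA Omega b xhat A -> row i A != 0) ->
       row istar Astar != 0 /\ forall i : 'I_m, row i Astar != 0)].
Proof.
move=> _ Ai_opt istar_min Astar tstar.
have [feasA_Astar _] := Ai_opt istar.
have tstar_le_slack A i : feasA Omega b xhat A -> tstar <= slack b xhat A i.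
  by move=> feasA_A; apply: le_trans (istar_min i) _; apply: (Ai_opt i).2.
split.
- exact: nlo_feas_delta.
- exact: nlo_obj_delta.
- by move=> A c pi; apply: nlo_obj_ge.
- have rowA_neq0 i : (0 < b 0 i \/ forall A, feasA Omega b xhat A -> row i A != 0) ->
      row i Astar != 0.
    by case=> [b_gt0 | row_neq0]; [exact: feasA_row_neq0 feasA_Astar b_gt0 | exact: row_neq0].
  by move=> nz; split=> [|i]; apply: rowA_neq0.
Qed.
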